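(* In the setting below, suppose the Borel sets $A_i$ exist as in the standing assumption and let $\pi(d\theta\mid a)$ be a Markov kernel satisfying the disintegration $\nu(d\theta)=\pi(d\theta\mid a)s(da)$. Define the Markov kernel $\tilde Q_0$ on $\mathcal{B}_1\times\mathcal{X}$ by $\tilde Q_0(A\mid x)=Q(t^{-1}(A)\mid x)$. Then $\tilde Q_0$ is a version of the formal posterior for the model $\tilde P$ and prior $s$, i.e. $\tilde P(dx\mid a)s(da)=\tilde Q_0(da\mid x)M(dx)$ as joint measures on $\mathcal{X}\times[0,\infty)$.
   Context: $(\mathcal{X},\mathcal{B})$ and $(\Theta,\mathcal{C})$ are Polish spaces with Borel $\sigma$-algebras; $\{P(\cdot\mid\theta)\}$ is a Markov kernel on $\mathcal{B}\times\Theta$; $\nu$ is a $\sigma$-finite measure on $\Theta$; the marginal $M(B)=\int P(B\mid\theta)\nu(d\theta)$ is assumed $\sigma$-finite; $Q(d\theta\mid x)$ is a Markov kernel with $P(dx\mid\theta)\nu(d\theta)=Q(d\theta\mid x)M(dx)$ as joint measures. Let $t:\Theta\to[0,\infty)$ be measurable, $\mathcal{B}_1$ the Borel sets of $[0,\infty)$, and $s(A)=\nu(t^{-1}(A))$. Standing assumption: there are disjoint Borel sets $A_1,A_2,\dots$ with $\bigcup_i A_i=[0,\infty)$ and $0<\nu(t^{-1}(A_i))<\infty$ for each $i$. The disintegration $\nu(d\theta)=\pi(d\theta\mid a)s(da)$ means $\int_\Theta f_2(t(\theta))f_1(\theta)\nu(d\theta)=\int_0^\infty f_2(a)\left(\int_\Theta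 f_1(\theta)\pi(d\theta\mid a)\right)s(da)$ for all nonnegative measurable $f_1$ on $\Theta$ and $f_2$ on $[0,\infty)$. The new model is $\tilde P(dx\mid a)=\int_\Theta P(dx\mid\theta)\pi(d\theta\mid a)$. *)

From HB Require Import structures.
From mathcomp Require Import all_boot all_order all_algebra.
From mathcomp Require Import mathcomp_extra boolp classical_sets functions.
From mathcomp Require Import cardinality fsbigop reals ereal topology.
From mathcomp Require Import normedtype sequences esum measure.
From mathcomp Require Import measurable_realfun numfun lebesgue_measure.
From mathcomp Require Import lebesgue_integral kernel.
Set Implicit Arguments. Unset Strict Implicit. Unset Printing Implicit Defensive.
Import Order.TTheory GRing.Theory Num.Theory.
Local Open Scope classical_set_scope.
Local Open Scope ring_scope.
Local Open Scope ereal_scope.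

Definition joint_kx d d' (X : measurableType d) (Y : measurableType d')
  (R : realType) (m : set Y -> \bar R) (k : Y -> set X -> \bar R)
  (C : set (X * Y)) : \bar R :=
  \int[m]_y k y [set x | C (x, y)].

Definition joint_xk d d' (X : measurableType d) (Y : measurableType d')
  (R : realType) (m : set X -> \bar R) (k : X -> set Y -> \bar R)
  (C : set (X * Y)) : \bar R :=
  \int[m]_x k x [set y | C (x, y)].

Definition Ptilde d d' (X : measurableType d) (Th : measurableType d')
  (R : realType) (P : Th -> set X -> \bar R) (pi : R -> set Th -> \bar R)
  (a : R) (B : set X) : \bar R :=
  \int[pi a]_th P th B.

Definition Qtilde0 d d' (X : measurableType d) (Th : measurableType d')
  (R : realType) (Q : X -> set Th -> \bar R) (t : Th -> R)
  (x : X) (A : set R) : \bar R :=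
  Q x (t @^-1` A).

From HB Require Import structures.
From mathcomp Require Import all_boot all_order all_algebra.
From mathcomp Require Import mathcomp_extra boolp classical_sets functions.
From mathcomp Require Import cardinality fsbigop reals ereal topology.
From mathcomp Require Import normedtype sequences esum measure.
From mathcomp Require Import measurable_realfun numfun lebesgue_measure.
From mathcomp Require Import lebesgue_integral kernel.
Import Order.TTheory GRing.Theory Num.Theory.
Local Open Scope classical_set_scope.
Local Open Scope ring_scope.
Local Open Scope ereal_scope.

(** Both sides are measures on [X * R]. Since [Q~_0(. | x)] is the image of
    [Q(. | x)] under [t], the right-hand side is the image under
    [(x, th) |-> (x, t th)] of the joint law [Q(dth | x) M(dx)], which by
    hypothesis is the joint law [P(dx | th) nu(dth)]. On a rectangle [A * B]
    it is therefore [\int 1_B(t th) P(A | th) nu(dth)], and the disintegration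
    of [nu] along [t], applied to [f1 = P(A | .)] and [f2 = 1_B], turns this
    into [\int 1_B(a) P~(A | a) s(da)], the left-hand side. Rectangles form a
    pi-system generating the product sigma-algebra, and the right-hand side
    gives the finite mass [M(F)] to [F * R], so the two measures agree. *)

Lemma measure_unique_setX {d1 d2} {X : measurableType d1} {Y : measurableType d2}
    {R : realType} {m1 m2 : {measure set (X * Y) -> \bar R}} {F : (set X)^nat} :
  setT = \bigcup_k F k -> (forall k, measurable (F k)) ->
  (forall k, m1 (F k `*` setT) < +oo) ->
  (forall A B, measurable A -> measurable B -> m1 (A `*` B) = m2 (A `*` B)) ->
  forall C, measurable C -> m1 C = m2 C.
Proof.
move=> F_cover mF m1F_fin m1m2.
pose G := [set A `*` B | A in @measurable _ X & B in @measurable _ Y].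
apply: (measure_unique G (fun k => F k `*` setT)) => //.
- exact: measurable_prod_measurableType.
- move=> _ _ [A1 mA1 [B1 mB1 <-]] [A2 mA2 [B2 mB2 <-]].
  rewrite -setXI; exists (A1 `&` A2); first exact: measurableI.
  by exists (B1 `&` B2); first exact: measurableI.
- by move=> k; exists (F k) => //; exists setT.
- by rewrite -setX_bigcupl -F_cover setXTT.
- by move=> _ [A mA [B mB <-]]; exact: m1m2.
Qed.

Section joint_kx_measure.
Context d d' (X : measurableType d) (Y : measurableType d') (R : realType).

Lemma joint_kx_setX (m : {measure set Y -> \bar R})
    (k : Y -> {measure set X -> \bar R}) A B :
  joint_kx m k (A `*` B) = \int[m]_y ((\1_B y)%:E * k y A).
Proof.
apply: eq_integral => y _; rewrite indicE.
have [/set_mem By|/negP ByN] := boolP (y \in B).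
  by rewrite mul1e; congr (k y _); apply/seteqP; split=> [x []|x].
rewrite mul0e -(measure0 (k y)); congr (k y _).
by apply/seteqP; split=> x // [_ /mem_set/ByN].
Qed.

Let measurable_ysectionE (C : set (X * Y)) y :
  measurable C -> measurable [set x | C (x, y)].
Proof. by move=> mC; have := measurable_ysection y mC; rewrite ysectionE. Qed.

Variables (m : {measure set Y -> \bar R}) (k : R.-fker Y ~> X).

Lemma measurable_fun_kernel_ysection (C : set (X * Y)) :
  measurable C -> measurable_fun [set: Y] (fun y => k y [set x | C (x, y)]).
Proof.
move=> mC; have mCswap : measurable (unstable.swap @^-1` C).
  by rewrite -[X in measurable X]setTI; exact: measurable_swap.
have := measurable_fun_xsection_finite_kernel k (A := unstable.swap @^-1` C).
by rewrite inE => /(_ mCswap); apply: eq_measurable_fun => y _; rewrite xsectionE.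
Qed.

Let joint_kx0 : joint_kx m (fun y => k y) set0 = 0.
Proof. by apply: integral0_eq => y _; exact: measure0. Qed.

Let joint_kx_ge0 C : 0 <= joint_kx m (fun y => k y) C.
Proof. exact: integral_ge0. Qed.

Let joint_kx_sigma_additive : semi_sigma_additive (joint_kx m (fun y => k y)).
Proof.
move=> C mC tC mUC; rewrite [X in _ --> X](_ : _ =
  \int[m]_y \sum_(n <oo) k y [set x | C n (x, y)]); last first.
  apply: eq_integral => y _; apply/esym/cvg_lim => //.
  apply: measure_semi_sigma_additive.
  - by move=> n; exact: measurable_ysectionE.
  - apply/trivIsetP => i j _ _ ij; apply/seteqP; split => // x [Cix Cjx].
    have /seteqP[CijE _] := (trivIsetP.1 tC) i j I I ij.
    exact: (CijE (x, y)).
  - exact: measurable_ysectionE _ y mUC.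
apply/cvg_closeP; split.
  by apply: is_cvg_nneseries => n _ _; exact: integral_ge0.
rewrite closeE// integral_nneseries// => n.
exact: measurable_fun_kernel_ysection.
Qed.

HB.instance Definition _ := isMeasure.Build _ _ R
  (joint_kx m (fun y => k y)) joint_kx0 joint_kx_ge0 joint_kx_sigma_additive.

End joint_kx_measure.

Section disintegration.
Context (R : realType) (dX dT : measure_display) (X : measurableType dX)
  (Th : measurableType dT).
Variables (P : R.-spker Th ~> X) (nu : {measure set Th -> \bar R})
  (t : Th -> R) (s : {measure set R -> \bar R}) (pi : R.-spker R ~> Th).
Hypothesis disintegration : forall (f1 : Th -> R) (f2 : R -> R),
  measurable_fun setT f1 -> (forall th, (0 <= f1 th)%R) ->
  measurable_fun setT f2 -> (forall a, (0 <= f2 a)%R) ->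
  \int[nu]_th (f2 (t th) * f1 th)%:E
    = \int[s]_a ((f2 a)%:E * \int[pi a]_th (f1 th)%:E).

Lemma joint_kx_mkcomp_setX A B : measurable A -> measurable B ->
  joint_kx s (fun a => mkcomp_noparam pi P a) (A `*` B)
    = joint_kx nu (fun th => P th) (A `*` t @^-1` B).
Proof.
move=> mA mB; rewrite !joint_kx_setX.
pose PA th := fine (P th A).
have PAE th : P th A = (PA th)%:E.
  rewrite fineK// ge0_fin_numE//; apply: le_lt_trans (ltry 1%R).
  apply: le_trans (sprob_kernel_le1 P th).
  by apply: le_measure; rewrite ?inE.
transitivity (\int[s]_a ((\1_B a)%:E * \int[pi a]_th (PA th)%:E)).
  by apply: eq_integral => a _; congr (_ * _); apply: eq_integral => th _; rewrite PAE.
rewrite -disintegration //.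
- by apply: eq_integral => th _; rewrite PAE.
- exact: measurableT_comp (measurable_kernel P A mA).
- by move=> th; exact/fine_ge0/measure_ge0.
Qed.

End disintegration.

Theorem theorem3p2 (R : realType)
  (dX dT : measure_display) (X : measurableType dX) (Th : measurableType dT)
  (P : R.-pker Th ~> X) (nu : {measure set Th -> \bar R})
  (M : {measure set X -> \bar R}) (Q : R.-pker X ~> Th)
  (t : Th -> R) (s : {measure set R -> \bar R}) (pi : R.-pker R ~> Th) :
  sigma_finite setT nu ->
  (forall B, measurable B -> M B = \int[nu]_th P th B) ->
  sigma_finite setT M ->
  (forall C : set (X * Th), measurable C ->
     joint_kx nu (fun th => P th) C = joint_xk M (fun x => Q x) C) ->
  measurable_fun setT t ->
  (forall th, (0 <= t th)%R) ->
  (forall A, measurable A -> s A = nu (t @^-1` A)) ->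
  (exists A : (set R)^nat,
     (forall i, measurable (A i)) /\ trivIset setT A /\
     \bigcup_i A i = [set a | (0 <= a)%R] /\
     (forall i, 0 < nu (t @^-1` A i) < +oo)) ->
  (forall (f1 : Th -> R) (f2 : R -> R),
     measurable_fun setT f1 -> (forall th, (0 <= f1 th)%R) ->
     measurable_fun setT f2 -> (forall a, (0 <= f2 a)%R) ->
     \int[nu]_th (f2 (t th) * f1 th)%:E
       = \int[s]_a ((f2 a)%:E * \int[pi a]_th (f1 th)%:E)) ->
  (forall A, measurable A ->
     measurable_fun [set: X] (fun x : X => Qtilde0 (fun x => Q x) t x A : \bar R)) /\
  (forall x, Qtilde0 (fun x => Q x) t x setT = 1) /\
  (forall C : set (X * R), measurable C ->
     joint_kx s (Ptilde (fun th => P th) (fun a => pi a)) C = joint_xk M (Qtilde0 (fun x => Q x) t) C).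
Proof.
move=> _ M_integral [F F_cover F_fin] joint_PQ mt _ _ _ disintegration.
have mpre B : measurable B -> measurable (t @^-1` B).
  by move=> mB; rewrite -[X in measurable X]setTI; exact: mt.
split; first by move=> A mA; exact: measurable_kernel Q _ (mpre A mA).
split; first by move=> x; rewrite /Qtilde0 preimage_setT prob_kernel.
move=> C mC.
pose tsnd (z : X * Th) := (z.1, t z.2).
have mtsnd : measurable_fun setT tsnd.
  by apply: measurable_fun_pair => //; exact: measurableT_comp.
have mtsndC : measurable (tsnd @^-1` C).
  by rewrite -[X in measurable X]setTI; exact: mtsnd.
have -> : joint_xk M (Qtilde0 (fun x => Q x) t) C =
    pushforward (joint_kx nu (fun th => P th)) tsnd C.
  by rewrite /pushforward joint_PQ.
have -> : Ptilde (fun th => P th) (fun a => pi a) =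
  (fun a => mkcomp_noparam pi P a) by [].
have pushforward_setX A B : pushforward (joint_kx nu (fun th => P th)) tsnd (A `*` B)
    = joint_kx nu (fun th => P th) (A `*` t @^-1` B) by [].
symmetry; apply: (measure_unique_setX F_cover) => //.
- by move=> k; have [] := F_fin k.
- move=> k; rewrite /= pushforward_setX preimage_setT joint_kx_setX.
  under eq_integral do rewrite indicT mul1e.
  by rewrite -M_integral; have [] := F_fin k.
- move=> A B mA mB; rewrite /= pushforward_setX; symmetry.
  exact: joint_kx_mkcomp_setX.
Qed.
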